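(* Let $G$ be a group, $N$ a normal subgroup and $\mu\in\mathrm{Q}(N)^G$. Then $D(\mu)=\sup_{g\in G,\,x\in N}|\mu([g,x])|$.
   Context: $[g,x]=gxg^{-1}x^{-1}$. $\mathrm{Q}(N)^G$ is the space of homogeneous quasimorphisms $\mu\colon N\to\mathbb{R}$ (i.e. $D(\mu)=\sup_{x_1,x_2\in N}|\mu(x_1x_2)-\mu(x_1)-\mu(x_2)|<\infty$ and $\mu(x^n)=n\mu(x)$ for $n\in\mathbb{Z}$) satisfying $\mu(gxg^{-1})=\mu(x)$ for all $g\in G$, $x\in N$. *)

From HB Require Import structures.
From mathcomp Require Import all_boot all_order all_algebra.
From mathcomp Require Import all_classical all_reals.
Set Implicit Arguments. Unset Strict Implicit. Unset Printing Implicit Defensive.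
Import Order.TTheory GRing.Theory Num.Theory.
Local Open Scope classical_set_scope.
Local Open Scope ring_scope.

Section Defs.
Variable G : groupType.

(* commutator with the paper's convention [g,x] = g x g^-1 x^-1 *)
Definition pcomm (g x : G) : G := (g * x * g^-1 * x^-1)%g.

Definition zpowg (x : G) (n : int) : G :=
  match n with
  | Posz k => (x ^+ k)%g
  | Negz k => ((x ^+ k.+1)^-1)%g
  end.

Definition normal_subgroup (N : set G) : Prop :=
  [/\ N 1%g,
      (forall x y, N x -> N y -> N (x * y)%g),
      (forall x, N x -> N (x^-1)%g)
    & (forall g x, N x -> N (g * x * g^-1)%g)].

Variable R : realType.

Definition defect_set (N : set G) (mu : G -> R) : set R :=
  [set `|mu (x1 * x2)%g - mu x1 - mu x2| | x1 in N & x2 in N].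

Definition defect (N : set G) (mu : G -> R) : R := sup (defect_set N mu).

(* mu (only its values on N matter) is a homogeneous quasimorphism on N,
   invariant under conjugation by G: mu \in Q(N)^G *)
Definition inv_hom_quasimorphism (N : set G) (mu : G -> R) : Prop :=
  [/\ (exists C : R, forall x1 x2, N x1 -> N x2 ->
          `|mu (x1 * x2)%g - mu x1 - mu x2| <= C),
      (forall x (n : int), N x -> mu (zpowg x n) = n%:~R * mu x)
    & (forall g x, N x -> mu (g * x * g^-1)%g = mu x)].
End Defs.

From HB Require Import structures.
From mathcomp Require Import all_boot all_order all_algebra.
From mathcomp Require Import all_classical all_reals.
From mathcomp Require Import lra.
Import Order.TTheory GRing.Theory Num.Theory.
Local Open Scope classical_set_scope.
Local Open Scope ring_scope.

(* Commutator values are bounded by D(mu), since [g,x] = (g x g^-1) x^-1 and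
   mu is conjugation invariant and odd. Conversely, for x, y in N the group
   identity [x y^-1, y x y] (y x)^3 x^-3 = x^2 y^3 x^-2, together with
   homogeneity and invariance, yields
   3 |mu(xy) - mu x - mu y| <= C + 2 D(mu), where C is the supremum of
   |mu [g,x]|; hence D(mu) <= (C + 2 D(mu)) / 3, i.e. D(mu) <= C. *)

Lemma pcomm_mul_cubes (G : groupType) (x y : G) :
  (pcomm (x * y^-1) (y * x * y) * ((y * x) * (y * x) * (y * x) * (x * x * x)^-1)
   = (x * x) * (y * y * y) * (x * x)^-1)%g.
Proof. by rewrite /pcomm !invgM !invgK !mulgA !(mulgK, mulgVK). Qed.

Section InvariantHomogeneousQuasimorphism.
Variables (G : groupType) (R : realType) (N : set G) (mu : G -> R).

Hypotheses (N1 : N 1%g) (NM : forall {x y}, N x -> N y -> N (x * y)%g)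
  (NV : forall {x}, N x -> N (x^-1)%g)
  (NJ : forall g {x}, N x -> N (g * x * g^-1)%g).

Hypotheses (mu_bounded : exists C : R, forall x1 x2, N x1 -> N x2 ->
                `|mu (x1 * x2)%g - mu x1 - mu x2| <= C)
  (mu_zpow : forall x (n : int), N x -> mu (zpowg x n) = n%:~R * mu x)
  (mu_conj : forall g {x}, N x -> mu (g * x * g^-1)%g = mu x).

Lemma muV x : N x -> mu (x^-1)%g = - mu x.
Proof.
by move=> Nx; have := mu_zpow x (Negz 0) Nx; rewrite /= expg1 NegzE mulN1r.
Qed.

Lemma mu_cube x : N x -> mu (x * x * x)%g = 3 * mu x.
Proof.
by move=> Nx; have := mu_zpow x 3 Nx; rewrite /= !expgS expg0 mulg1 mulgA.
Qed.

Lemma mu_mulC {x y} : N x -> N y -> mu (y * x)%g = mu (x * y)%g.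
Proof.
move=> Nx Ny; have := mu_conj (x^-1)%g (NM Nx Ny).
by rewrite invgK !mulgA mulVg mul1g.
Qed.

Lemma has_sup_defect_set : has_sup (defect_set N mu).
Proof.
split; first by exists `|mu (1 * 1)%g - mu 1%g - mu 1%g|; exists 1%g => //; exists 1%g.
by have [C hC] := mu_bounded; exists C => _ [x1 Nx1 [x2 Nx2 <-]]; apply: hC.
Qed.

Lemma defect_ge {x1 x2} : N x1 -> N x2 ->
  `|mu (x1 * x2)%g - mu x1 - mu x2| <= defect N mu.
Proof.
move=> Nx1 Nx2; apply: ub_le_sup; first exact: has_sup_defect_set.2.
by exists x1 => //; exists x2.
Qed.

Lemma norm_mu_pcomm_le_defect g {x} : N x -> `|mu (pcomm g x)| <= defect N mu.
Proof.
move=> Nx; have := defect_ge (NJ g Nx) (NV Nx).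
by rewrite mu_conj // muV // opprK subrK.
Qed.

Definition pcomm_set := [set `|mu (pcomm g x)| | g in [set: G] & x in N].

Lemma has_sup_pcomm_set : has_sup pcomm_set.
Proof.
split; first by exists `|mu (pcomm 1%g 1%g)|; exists 1%g => //; exists 1%g.
by exists (defect N mu) => _ [g _ [x Nx <-]]; apply: norm_mu_pcomm_le_defect.
Qed.

Lemma norm_mu_pcomm_le_sup g {x} : N x -> `|mu (pcomm g x)| <= sup pcomm_set.
Proof.
move=> Nx; apply: ub_le_sup; first exact: has_sup_pcomm_set.2.
by exists g => //; exists x.
Qed.

Lemma sup_pcomm_set_le_defect : sup pcomm_set <= defect N mu.
Proof.
apply: ge_sup; first exact: has_sup_pcomm_set.1.
by move=> _ [g _ [x Nx <-]]; apply: norm_mu_pcomm_le_defect.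
Qed.

Lemma three_defect_le {x y} : N x -> N y ->
  3 * `|mu (x * y)%g - mu x - mu y| <= sup pcomm_set + 2 * defect N mu.
Proof.
move=> Nx Ny.
have Nxx := NM Nx Nx; have Nyx := NM Ny Nx.
have Nyxyx := NM Nyx Nyx; have Nx3 := NM Nxx Nx.
have Nyx3 := NM Nyxyx Nyx; have Nx3V := NV Nx3.
have Ncomm : N (pcomm (x * y^-1) (y * x * y)).
  by apply: NM (NV (NM Nyx Ny)); apply: NJ; apply: NM Nyx Ny.
have outer := defect_ge Ncomm (NM Nyx3 Nx3V).
rewrite pcomm_mul_cubes (mu_conj _ (NM (NM Ny Ny) Ny)) in outer.
have inner := defect_ge Nyx3 Nx3V.
rewrite !mu_cube ?muV ?mu_cube ?(mu_mulC Nx Ny) // in outer inner.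
have hc := norm_mu_pcomm_le_sup (x * y^-1) (NM Nyx Ny).
move: outer inner hc; rewrite !ler_norml => /andP[o1 o2] /andP[i1 i2] /andP[c1 c2].
rewrite -[3]ger0_norm // -normrM ler_norml; apply/andP; split; lra.
Qed.

Lemma defect_le_sup_pcomm_set : defect N mu <= sup pcomm_set.
Proof.
suff : defect N mu <= (sup pcomm_set + 2 * defect N mu) / 3 by lra.
apply: ge_sup; first exact: has_sup_defect_set.1.
by move=> _ [x1 Nx1 [x2 Nx2 <-]]; have := three_defect_le Nx1 Nx2; lra.
Qed.

End InvariantHomogeneousQuasimorphism.

Theorem proposition4p4 (G : groupType) (R : realType) (N : set G) (mu : G -> R)
  (hN : normal_subgroup N) (hmu : inv_hom_quasimorphism N mu) :
  defect N mu = sup [set `|mu (pcomm g x)| | g in [set: G] & x in N].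
Proof.
case: hN => N1 NM NV NJ; case: hmu => mu_bounded mu_zpow mu_conj.
apply/eqP; rewrite eq_le; apply/andP; split.
- exact: defect_le_sup_pcomm_set.
- exact: sup_pcomm_set_le_defect.
Qed.
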